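(* When the weighted GK algorithm described in the context is run, after the deletion step performed once $k$ updates have been seen, the number of type-2 elements stored in WQS is $O(\ell\log t_k)$.
   Context: A weighted stream consists of updates $(x_i,w(x_i))$, $i=1,2,\dots$, with $x_i$ from a totally ordered universe and $w(x_i)$ a positive integer. Let $W_k=\sum_{i=1}^k w(x_i)$, $\ell=1/\varepsilon$, $t_k=\lfloor\varepsilon W_k\rfloor$, and $t_0(x_k)=\lfloor\varepsilon(W_{k-1}+1)\rfloor$. The summary WQS stores elements $e_1<\dots<e_s$ of the stream with weights $w(e)$ and integers $\mathrm{rmin}(e),\mathrm{rmax}(e)$; a sentinel $e_0$ has $\mathrm{rmin}(e_0)=\mathrm{rmax}(e_0)=0$, $w(e_0)=1$; an element $+\infty$, larger than all others, is inserted at the start of the stream and always stored as $e_s$. Insert$(x,w(x))$: store $x$; let $e_i$ be the smallest stored element with $e_i>x$; set $\mathrm{rmin}(x)=\mathrm{rmin}(e_{i-1})+w(e_{i-1})$, $\mathrm{rmax}(x)=\mathrm{rmax}(e_i)$, and increase $\mathrm{rmin}(e_j),\mathrm{rmax}(e_j)$ by $w(x)$ for all $j\ge i$. Delete$(e_i)$: remove $e_i$, leaving other values unchanged. Define $g_i=\mathrm{rmin}(e_i)-(\mathrm{rmin}(e_{i-1})+w(e_{i-1})-1)$, $\Delta_i=\mathrm{rmax}(e_i)-\mathrm{rmin}(e_i)$, $G_i=g_i+w(e_i)-1$. Band values: after $k$ updates, $\mathbf{v}(x)=0$ if $t_k=t_0(x)$, and otherwise $\mathbf{v}(x)$ is the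 unique integer $\alpha\ge1$ with $2^{\alpha-1}+(t_k\bmod 2^{\alpha-1})\le t_k-t_0(x)<2^{\alpha}+(t_k\bmod 2^{\alpha})$. The segment $\mathrm{seg}(e_i)$ is the maximal set of consecutive stored elements $e_j,\dots,e_{i-1}$ all with band value strictly less than $\mathbf{v}(e_i)$; $G^*_i=G_i+\sum_{e_k\in\mathrm{seg}(e_i)}G_k$. Weighted GK algorithm: for each arriving update $(x_j,w(x_j))$: (i) run Insert$(x_j,w(x_j))$; (ii) (deletion step) while there is a stored $e_i$ ($1\le i<s$) with $\mathbf{v}(e_i)\le\mathbf{v}(e_{i+1})$ and $G^*_i+g_{i+1}+\Delta_{i+1}\le t_j$, run Delete on $e_i$ and on every element of $\mathrm{seg}(e_i)$. After the deletion step once $k$ updates have been seen, a stored element $e_i$ ($1\le i<s$) is type-1 if $\mathbf{v}(e_i)>\mathbf{v}(e_{i+1})$, and type-2 if it is not type-1 (in which case $G^*_i+g_{i+1}+\Delta_{i+1}>t_k$). *)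

From mathcomp Require Import all_boot all_order all_algebra.
Set Implicit Arguments. Unset Strict Implicit. Unset Printing Implicit Defensive.
Import Order.TTheory GRing.Theory Num.Theory.

(* Band values.  For the current threshold t (= t_k) and the arrival     *)
(* threshold t0 (= t_0(x)), band t t0 = 0 if t = t0, and otherwise the   *)
(* unique alpha >= 1 with                                                *)
(*   2^(alpha-1) + (t mod 2^(alpha-1)) <= t - t0 < 2^alpha + (t mod 2^alpha). *)
(* The intervals partition [1, oo), so the first such alpha (searched    *)
(* among 1 .. t - t0, which always contains it) is that unique alpha.    *)
Definition band_cond (t d a : nat) : bool :=
  (2 ^ a + t %% 2 ^ a <= d) && (d < 2 ^ a.+1 + t %% 2 ^ a.+1).

Definition band (t t0 : nat) : nat :=
  if t == t0 then 0
  else (find (band_cond t (t - t0)) (iota 0 (t - t0))).+1.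

(* Stored elements of WQS.  ekey = None encodes the element +oo.        *)
Section WQS.
Context {disp : Order.disp_t} {T : orderType disp}.

Record entry := Entry {
  ekey : option T;
  ew : nat;
  ermin : nat;
  ermax : nat;
  et0 : nat
}.

Definition dentry : entry := Entry None 1 0 0 0.

(* A summary is the list [e_1; ...; e_s] of stored elements, in         *)
(* increasing order; list position p (0-based) holds e_(p+1).  The      *)
(* sentinel e_0 (rmin = rmax = 0, w = 1) is implicit.                  *)
Definition summary := seq entry.

Definition ent (s : summary) (p : nat) : entry := nth dentry s p.

Definition prev_end (s : summary) (p : nat) : int :=
  if p is p'.+1 then ((ermin (ent s p'))%:Z + (ew (ent s p'))%:Z - 1)%R
  else (0 + 1 - 1)%R.

Definition gval (s : summary) (p : nat) : int :=
  ((ermin (ent s p))%:Z - prev_end s p)%R.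

Definition Dval (s : summary) (p : nat) : int :=
  ((ermax (ent s p))%:Z - (ermin (ent s p))%:Z)%R.

Definition Gval (s : summary) (p : nat) : int :=
  (gval s p + (ew (ent s p))%:Z - 1)%R.

Definition vband (t : nat) (s : summary) (p : nat) : nat :=
  band t (et0 (ent s p)).

(* Length of seg(e): the maximal run of stored elements immediately    *)
(* preceding position p whose band values are < the band value at p.   *)
Definition seglen (t : nat) (s : summary) (p : nat) : nat :=
  find (fun e => ~~ (band t (et0 e) < vband t s p)) (rev (take p s)).

Definition Gstar (t : nat) (s : summary) (p : nat) : int :=
  (Gval s p + \sum_(p - seglen t s p <= q < p) Gval s q)%R.

Definition deletable (t : nat) (s : summary) (p : nat) : bool :=
  [&& p.+1 < size s,
      vband t s p <= vband t s p.+1 &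
      (Gstar t s p + gval s p.+1 + Dval s p.+1 <= t%:Z)%R].

Definition delete_seg (t : nat) (s : summary) (p : nat) : summary :=
  take (p - seglen t s p) s ++ drop p.+1 s.

Definition key_gt (x : T) (e : entry) : bool :=
  if ekey e is Some y then (x < y)%O else true.

Definition bump (wx : nat) (e : entry) : entry :=
  Entry (ekey e) (ew e) (ermin e + wx) (ermax e + wx) (et0 e).

Definition insert (s : summary) (x : T) (wx t0x : nat) : summary :=
  let p := find (key_gt x) s in
  let newe := Entry (Some x) wx
                (if p is p'.+1 then ermin (ent s p') + ew (ent s p') else 0 + 1)
                (ermax (ent s p)) t0x in
  take p s ++ newe :: map (bump wx) (drop p s).

(* Deletion step (nondeterministic choice of which e_i to delete),    *)
(* with threshold t = t_j: del_step t s s' means that the while loop   *)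
(* started in s can end in s'.                                         *)
Inductive del_step (t : nat) : summary -> summary -> Prop :=
| del_done s : (forall p, ~~ deletable t s p) -> del_step t s s
| del_more s p s' : deletable t s p -> del_step t (delete_seg t s p) s' ->
                    del_step t s s'.

(* Initial summary: only +oo, with rmin = rmax = 1 (rank W + 1 with     *)
(* W = 0), w = 1 and t_0 = 0.                                          *)
Definition init_summary : summary := [:: Entry None 1 1 1 0].

Definition num_type2 (t : nat) (s : summary) : nat :=
  count (fun p => ~~ (vband t s p > vband t s p.+1)) (iota 0 (size s).-1).

End WQS.

(* Stream: updates (xs i, ws i), i = 1, 2, ...                          *)
Definition Wsum (ws : nat -> nat) (k : nat) : nat := \sum_(1 <= i < k.+1) ws i.

Definition tk {R : archiRealFieldType} (eps : R) (ws : nat -> nat) (k : nat) : nat :=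
  Num.truncn (eps * (Wsum ws k)%:R).

Definition t0k {R : archiRealFieldType} (eps : R) (ws : nat -> nat) (k : nat) : nat :=
  Num.truncn (eps * ((Wsum ws k.-1).+1)%:R).

Definition GK_run {R : archiRealFieldType} {disp : Order.disp_t} {T : orderType disp}
  (eps : R) (xs : nat -> T) (ws : nat -> nat) (S : nat -> @summary disp T) : Prop :=
  S 0 = init_summary /\
  forall j, 0 < j ->
    del_step (tk eps ws j)
      (insert (S j.-1) (xs j) (ws j) (t0k eps ws j)) (S j).

From Pilot Require Import Defs.
From mathcomp Require Import all_boot all_order all_algebra.
From mathcomp Require Import zify lra.
Import Order.TTheory GRing.Theory Num.Theory.

(* For a stored element, write G for its g + w - 1 and call it its mass.  The invariant
   behind the bound is: for every level b, the total mass of the stored elements of band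
   at most b is at most the total weight of the updates of band at most b.  An insertion
   adds the same amount w to both sides, a deletion hands the mass of seg(e_i) and e_i
   over to e_(i+1), whose band is at least theirs, and when the threshold t grows, every
   sublevel set of the new bands, restricted to the old thresholds, is a sublevel set of
   the old bands.  A type-2 element e_p whose successor has band b is not deletable, so
   the mass of seg(e_p), e_p and e_(p+1) is at least 2^(b-1); these windows overlap at
   most twice, so there are at most 4 W_b / 2^b such elements, where W_b is the weight
   of the updates of band at most b.  Such updates arrived at a threshold within
   2^(b+1) of t, so W_b = O(2^b / eps).  This leaves O(1/eps) type-2 elements for each of
   the O(log t) possible bands. *)

Set Implicit Arguments. Unset Strict Implicit. Unset Printing Implicit Defensive.

Section SeqFacts.
Variables (A B : Type) (f : A -> A -> B).

Lemma take_pairmap x s n : take n (pairmap f x s) = pairmap f x (take n s).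
Proof. by elim: s x n => [|y s IH] x [|n] //=; rewrite IH. Qed.

Lemma drop_pairmap x s n :
  drop n (pairmap f x s) = pairmap f (last x (take n s)) (drop n s).
Proof. by elim: s x n => [|y s IH] x [|n] //=; rewrite IH. Qed.

Lemma last_take (x : A) s n : n <= size s -> last x (take n s) = nth x (x :: s) n.
Proof. by elim: s x n => [|y s IH] x [|n] //= ns; rewrite IH // (set_nth_default x). Qed.

Lemma take_mid_drop x0 (L : seq A) a p : a <= p.+1 -> p.+1 < size L ->
  L = take a L ++ drop a (take p.+1 L) ++ nth x0 L p.+1 :: drop p.+2 L.
Proof.
move=> ap pL; rewrite -(drop_nth x0 pL) catA -{1}(take_takel _ ap) cat_take_drop.
by rewrite cat_take_drop.
Qed.

Lemma eq_bigl_all {R : Type} {idx : R} {op : R -> R -> R} {Q P1 P2 : pred A}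
    {F : A -> R} {L} :
  all Q L -> (forall x, Q x -> P1 x = P2 x) ->
  \big[op/idx]_(x <- L | P1 x) F x = \big[op/idx]_(x <- L | P2 x) F x.
Proof.
by elim: L => [|y L IH] /=; rewrite ?big_nil // => /andP [Qy QL] PE; rewrite !big_cons PE ?IH.
Qed.

Lemma big_drop_take {R : Type} {idx : R} {op : R -> R -> R} x0 (L : seq A) a b
    (F : A -> R) :
  a <= b -> b <= size L ->
  \big[op/idx]_(x <- drop a (take b L)) F x = \big[op/idx]_(a <= q < b) F (nth x0 L q).
Proof.
move=> ab bL; rewrite (big_nth x0) size_drop size_takel // -[in RHS](add0n a) big_addn.
apply: eq_big_nat => q /andP [_ qb]; rewrite nth_drop nth_take addnC //.
by rewrite addnC -ltn_subRL.
Qed.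

End SeqFacts.

Lemma count_consecutive_le2 (P : seq nat) (r : pred nat) : sorted ltn P ->
  (forall p p', p \in P -> p' \in P -> r p -> r p' -> p < p' -> p' = p.+1) ->
  count r P <= 2.
Proof.
move=> P_sorted consec; rewrite -size_filter.
have := sorted_filter ltn_trans r P_sorted.
have memP x : x \in filter r P -> (x \in P) && r x by rewrite mem_filter andbC.
case: (filter r P) memP => [|x1 [|x2 [|x3 l]]] // memP /and3P [lt12 lt23 _].
have /andP [P1 r1] := memP x1 (mem_head _ _).
have /andP [P2 r2] : (x2 \in P) && r x2 by apply: memP; rewrite !inE eqxx orbT.
have /andP [P3 r3] : (x3 \in P) && r x3 by apply: memP; rewrite !inE eqxx !orbT.
have := consec _ _ P1 P2 r1 r2 lt12; have := consec _ _ P1 P3 r1 r3 (ltn_trans lt12 lt23).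
lia.
Qed.

Lemma sum_windows_le (P : seq nat) (win : nat -> pred nat) (A : pred nat) (F : nat -> int)
    (n : nat) :
  sorted ltn P -> (forall q, q < n -> (0 <= F q)%R) -> (forall p q, p \in P -> win p q -> A q) ->
  (forall p p' q, p \in P -> p' \in P -> p < p' -> win p q -> win p' q -> p' = p.+1) ->
  (\sum_(p <- P) \sum_(0 <= q < n | win p q) F q <= (\sum_(0 <= q < n | A q) F q) *+ 2)%R.
Proof.
move=> P_sorted F_ge0 win_A consec.
rewrite (exchange_big_dep xpredT) //= -sumrMnl [leRHS]big_mkcond /=.
apply: ler_sum_nat => q /andP [_ qn]; rewrite (eq_bigr (fun=> (F q *+ 1)%R)) // sumrMnr sum1_count.
have [/hasP [p pP win_pq] | no_win] := boolP (has (win^~ q) P); last first.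
  move: no_win; rewrite has_count -leqNgt leqn0 => /eqP ->.
  by case: ifP; rewrite mulr0n ?mulrn_wge0 ?F_ge0.
rewrite (win_A p q pP win_pq); apply: ler_wpMn2l; first exact: F_ge0.
by apply: count_consecutive_le2 => // p1 p2 P1 P2 w1 w2 lt12; apply: consec lt12 w1 w2.
Qed.

Lemma big_nat_window {R : Type} {idx : R} {op : Monoid.law idx} (F : nat -> R) n a c :
  a <= c -> c <= n ->
  \big[op/idx]_(0 <= q < n | (a <= q) && (q < c)) F q = \big[op/idx]_(a <= q < c) F q.
Proof.
move=> ac cn; rewrite (big_nat_widen a c n) //= (big_nat_widenl a 0 n) //.
by apply: eq_bigl => q; rewrite andbC.
Qed.

Lemma count_le_sum_levels (l : seq nat) (Q : pred nat) (f : nat -> nat) B :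
  (forall p, p \in l -> f p <= B) ->
  count Q l <= \sum_(c < B.+1) count (fun p => Q p && (f p == c)) l.
Proof.
elim: l => [|x l IH] f_le //=; rewrite big_split /= leq_add //; last first.
  by apply: IH => p pl; apply: f_le; rewrite inE pl orbT.
case: (Q x) => //=; have fx : f x < B.+1 by rewrite ltnS f_le ?mem_head.
by rewrite (bigD1 (Ordinal fx)) //= eqxx leq_addr.
Qed.

(** * Band values *)

Definition band_bound (t a : nat) : nat := 2 ^ a + t %% 2 ^ a.

Lemma band_bound_ltS t a : band_bound t a < band_bound t a.+1.
Proof. by rewrite /band_bound; have := ltn_pmod t (expn_gt0 2 a); rewrite expnS; lia. Qed.

Lemma band_bound_leq t : {homo band_bound t : a b / a <= b}.
Proof. by apply: homo_leq => // [y x z|a]; [apply: leq_trans | apply/ltnW/band_bound_ltS]. Qed.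

Lemma band_bound_lt t a : band_bound t a < 2 ^ a.+1.
Proof. by rewrite /band_bound expnS; have := ltn_pmod t (expn_gt0 2 a); lia. Qed.

Lemma band_leE t x b : x <= t -> (band t x <= b) = (t - x < band_bound t b).
Proof.
move=> xt; rewrite /band; case: eqP => [<-|ne].
  by rewrite subnn /band_bound; have := expn_gt0 2 b; lia.
have has_band n : t - x < band_bound t n -> has (band_cond t (t - x)) (iota 0 n).
  elim: n => [|n IH] lt_n; first by move: lt_n; rewrite /band_bound expn0 modn1; lia.
  rewrite -[n.+1]addn1 iotaD has_cat /= add0n orbF /band_cond -!/(band_bound t _).
  by case: (ltnP (t - x) (band_bound t n)) => [/IH -> // | _]; rewrite lt_n orbT.
have hasd : has (band_cond t (t - x)) (iota 0 (t - x)).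
  by apply: has_band; rewrite /band_bound; have := ltn_expl (t - x) (isT : 1 < 2); lia.
have := nth_find 0 hasd; have := hasd; rewrite has_find size_iota.
set a := find _ _ => lt_a; rewrite nth_iota // add0n /band_cond -!/(band_bound t _).
move=> /andP [lo hi].
apply/idP/idP => [/(band_bound_leq t)|]; first lia.
by apply: contraTT; rewrite -!leqNgt => /(band_bound_leq t); lia.
Qed.

Definition cdivn (x d : nat) : nat := (x + d.-1) %/ d.

Lemma leq_cdivn d : {homo cdivn ^~ d : x y / x <= y}.
Proof. by move=> x y xy; apply: leq_div2r; lia. Qed.

Lemma cdivnMA x m d : 0 < m -> 0 < d -> cdivn (cdivn x m) d = cdivn x (m * d).
Proof.
move=> m0 d0; rewrite /cdivn; case: x => [|x].
  by rewrite !add0n !divn_small //; lia.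
have cdivS y n : 0 < n -> (y.+1 + n.-1) %/ n = (y %/ n).+1.
  move=> n0; rewrite (_ : y.+1 + n.-1 = y + 1 * n); last lia.
  by rewrite divnDr ?dvdn_mull // mulnK // addn1.
by rewrite cdivS // cdivS // cdivS ?muln_gt0 ?m0 // divnMA.
Qed.

Lemma band_le_cdivnE t x b : x <= t -> (band t x <= b) = (t %/ 2 ^ b <= cdivn x (2 ^ b)).
Proof.
move=> xt; rewrite band_leE // /cdivn leq_divRL ?expn_gt0 // /band_bound.
by have := divn_eq t (2 ^ b); have := expn_gt0 2 b; lia.
Qed.

Lemma band_eq0 t x : (band t x == 0) = (t == x).
Proof. by rewrite /band; case: (eqVneq t x). Qed.

Lemma band_anti t x y : x <= y -> y <= t -> band t y <= band t x.
Proof.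
move=> xy yt; rewrite band_le_cdivnE //.
by apply: (leq_trans _ (leq_cdivn _ xy)); rewrite -band_le_cdivnE //; lia.
Qed.

Lemma band_monotone t t' x : x <= t -> t <= t' -> band t x <= band t' x.
Proof.
move=> xt tt'; rewrite band_le_cdivnE //.
by apply: leq_trans (leq_div2r _ tt') _; rewrite -band_le_cdivnE //; lia.
Qed.

(* With g + 1 = band t y, compare the ceilings of x and y at scale 2^(g+1). *)
Lemma band_le_later t t' x y : x <= t -> y <= t -> t <= t' ->
  band t x <= band t y -> band t' x <= band t' y.
Proof.
move=> xt yt tt' le_xy; case: (leqP y x) => [yx | xy]; first exact: band_anti (leq_trans xt tt').
case Ey: (band t y) le_xy => [|g] le_xy.
  by move/eqP: Ey; move: le_xy; rewrite leqn0 !band_eq0 => /eqP tx /eqP ty; lia.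
have ax : t %/ 2 ^ g.+1 <= cdivn x (2 ^ g.+1) by rewrite -band_le_cdivnE.
have ay : cdivn y (2 ^ g) < t %/ 2 ^ g by rewrite ltnNge -band_le_cdivnE // Ey ltnn.
have halve : t %/ 2 ^ g <= 2 * (t %/ 2 ^ g.+1) + 1.
  rewrite expnSr divnMA; have := divn_eq (t %/ 2 ^ g) 2.
  by have := ltn_pmod (t %/ 2 ^ g) (isT : 0 < 2); lia.
have yx : cdivn y (2 ^ g.+1) <= cdivn x (2 ^ g.+1).
  rewrite expnSr -cdivnMA ?expn_gt0 //.
  apply: leq_trans (leq_cdivn 2 (_ : _ <= 2 * cdivn x (2 ^ g.+1))) _; first lia.
  rewrite -expnSr; set c := cdivn x _; rewrite /cdivn (_ : 2 * c + 2.-1 = 1 + c * 2); last lia.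
  by rewrite divnDr ?dvdn_mull // mulnK // divn_small.
have gy : g.+1 <= band t' y by rewrite -Ey; apply: band_monotone.
rewrite band_le_cdivnE; last lia.
apply: leq_trans (_ : cdivn y (2 ^ band t' y) <= _); first by rewrite -band_le_cdivnE //; lia.
rewrite -(subnKC gy) expnD -!cdivnMA ?expn_gt0 //; exact: leq_cdivn.
Qed.

Lemma band_sublevel_later t t' b : t <= t' ->
  (forall c, c <= t -> b < band t' c) \/
  exists b', forall c, c <= t -> (band t' c <= b) = (band t c <= b').
Proof.
move=> tt'; have [c_ex | no_c] := boolP [exists c : 'I_t.+1, band t' c <= b]; last first.
  left=> c ct; rewrite ltnNge; apply: contra no_c => cb.
  by apply/existsP; exists (Ordinal (ct : c < t.+1)).
have /ex_minnP [c0 /andP [c0t c0b] c0_min] : exists c, (c <= t) && (band t' c <= b).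
  by case/existsP: c_ex => c cb; exists c; rewrite cb -ltnS ltn_ord.
right; exists (band t c0) => c ct; apply/idP/idP => [cb | le_c].
  by apply: band_anti => //; apply: c0_min; rewrite ct cb.
exact: leq_trans (band_le_later ct c0t tt' le_c) c0b.
Qed.

Lemma bandS_exp2_le t x c : x <= t -> band t x = c.+1 -> 2 ^ c <= t - x.
Proof.
move=> xt band_x; have : ~~ (band t x <= c) by rewrite band_x ltnn.
by rewrite band_leE // -leqNgt /band_bound; lia.
Qed.

Lemma exp2_band_le t x : x <= t -> 2 ^ band t x <= 2 * (t - x) + 1.
Proof.
move=> xt; case E: (band t x) => [|c]; first by rewrite expn0; lia.
by rewrite expnS; have := bandS_exp2_le xt E; lia.
Qed.

Lemma band_le_log t x : x <= t -> band t x <= (trunc_log 2 t).+1.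
Proof.
move=> xt; case E: (band t x) => [|c] //; rewrite ltnS.
by apply: trunc_log_max => //; have := bandS_exp2_le xt E; lia.
Qed.

(** * The statistics of a summary *)

(* What the analysis keeps of a stored element e_i: t_0(e_i), g_i, Delta_i and w(e_i);
   [sG] is G_i. *)
Record stat := Stat { st0 : nat; sg : int; sD : int; sw : nat }.

Definition dstat : stat := Stat 0 0 0 0.

Definition sG (x : stat) : int := (sg x + (sw x)%:Z - 1)%R.

Definition absorb (x : stat) (S : int) : stat := Stat (st0 x) (sg x + S)%R (sD x) (sw x).

Lemma sG_absorb x S : sG (absorb x S) = (sG x + S)%R.
Proof. by rewrite /sG /=; lia. Qed.

Section Stats.
Context {disp : Order.disp_t} {T : orderType disp}.
Local Notation entry := (@entry disp T).
Local Notation dentry := (@dentry disp T).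
Local Notation summary := (@summary disp T).
Implicit Types (a b e : entry) (s : summary).

(* g_i only depends on e_(i-1) and e_i through rlast e_(i-1) = rmin + w - 1, so the
   statistics of a summary are a [pairmap] starting from the sentinel [dentry]. *)
Definition rlast e : int := ((ermin e)%:Z + (ew e)%:Z - 1)%R.

Definition stat_of a b : stat :=
  Stat (et0 b) ((ermin b)%:Z - rlast a)%R ((ermax b)%:Z - (ermin b)%:Z)%R (ew b).

Definition stats s : seq stat := pairmap stat_of dentry s.

Lemma size_stats s : size (stats s) = size s.
Proof. exact: size_pairmap. Qed.

Lemma nth_stats s q : q < size s ->
  nth dstat (stats s) q = stat_of (nth dentry (dentry :: s) q) (ent s q).
Proof. by move=> qs; rewrite (nth_pairmap dentry). Qed.

Lemma nth_statsE s q : q < size s ->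
  nth dstat (stats s) q = Stat (et0 (ent s q)) (gval s q) (Dval s q) (ew (ent s q)).
Proof. by move=> qs; rewrite nth_stats //; case: q qs. Qed.

Lemma gvalE s q : q < size s -> gval s q = sg (nth dstat (stats s) q).
Proof. by move=> qs; rewrite nth_statsE. Qed.

Lemma DvalE s q : q < size s -> Dval s q = sD (nth dstat (stats s) q).
Proof. by move=> qs; rewrite nth_statsE. Qed.

Lemma GvalE s q : q < size s -> Gval s q = sG (nth dstat (stats s) q).
Proof. by move=> qs; rewrite nth_statsE. Qed.

Lemma et0E s q : q < size s -> et0 (ent s q) = st0 (nth dstat (stats s) q).
Proof. by move=> qs; rewrite nth_statsE. Qed.

Lemma sG_stat_of a b : sG (stat_of a b) = (rlast b - rlast a)%R.
Proof. by rewrite /sG /= /rlast; lia. Qed.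

Lemma sum_sG_stats a l : (\sum_(x <- pairmap stat_of a l) sG x = rlast (last a l) - rlast a)%R.
Proof.
elim: l a => [|b l IH] a /=; first by rewrite big_nil subrr.
by rewrite big_cons IH sG_stat_of addrC addrA subrK.
Qed.

Lemma pairmap_stat_of_bump w a l :
  pairmap stat_of (Defs.bump w a) (map (Defs.bump w) l) = pairmap stat_of a l.
Proof.
elim: l a => //= b l IH a; rewrite IH; congr (_ :: _).
by rewrite /stat_of /rlast /=; congr Stat; lia.
Qed.

Definition new_entry s (x : T) wx t0x p : entry :=
  Entry (Some x) wx (if p is p'.+1 then ermin (ent s p') + ew (ent s p') else 0 + 1)
    (ermax (ent s p)) t0x.

Lemma ermin_new_entry s x wx t0x p : p <= size s ->
  ((ermin (new_entry s x wx t0x p))%:Z = rlast (last dentry (take p s)) + 1)%R.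
Proof.
by move=> ps; rewrite last_take //; case: p ps => [|p] _; rewrite /= /rlast /ent /=; lia.
Qed.

Lemma stats_insert s x wx t0x (p := find (key_gt x) s) :
  stats (insert s x wx t0x) =
  take p (stats s) ++ stat_of (last dentry (take p s)) (new_entry s x wx t0x p)
                   :: drop p (stats s).
Proof.
have ps : p <= size s by rewrite /p find_size.
rewrite /stats /insert -/p pairmap_cat take_pairmap drop_pairmap /=; congr (_ ++ _ :: _).
have rlast_new : rlast (new_entry s x wx t0x p) = rlast (Defs.bump wx (last dentry (take p s))).
  by rewrite {1}/rlast ermin_new_entry // /rlast /=; lia.
rewrite -[RHS](pairmap_stat_of_bump wx); case: (map _ _) => //= e l.
by rewrite /stat_of rlast_new.
Qed.

Lemma stats_delete_seg s (a p : nat) : a <= p -> p.+1 < size s ->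
  stats (take a s ++ drop p.+1 s) =
  take a (stats s) ++ absorb (nth dstat (stats s) p.+1)
                        (\sum_(x <- drop a (take p.+1 (stats s))) sG x)%R
                   :: drop p.+2 (stats s).
Proof.
move=> ap ps; set prev := last dentry (take a s).
have last_mid : last prev (drop a (take p.+1 s)) = ent s p.
  by rewrite /prev -(take_takel _ (leqW ap)) -last_cat cat_take_drop last_take //; lia.
rewrite /stats pairmap_cat (drop_nth dentry ps) /= take_pairmap !drop_pairmap.
rewrite take_pairmap drop_pairmap (take_takel _ (leqW ap)) -/prev sum_sG_stats last_mid.
rewrite (nth_pairmap dentry) // last_take //=.
by congr (_ ++ _ :: _); rewrite /absorb /stat_of /= /rlast /ent; congr Stat; lia.
Qed.

End Stats.

(** * The invariant *)

Definition stat_inv (t : nat) (x : stat) : bool :=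
  [&& (1 <= sg x)%R, (sD x <= (st0 x)%:Z)%R, (sg x + sD x <= (t.+1)%:Z)%R,
      st0 x <= t & 0 < sw x].

(* [Y] lists the pairs (t_0(x), w(x)) of the updates seen so far. *)
Definition mass_dominated (t : nat) (L : seq stat) (Y : seq (nat * nat)) : Prop :=
  forall b, (\sum_(x <- L | (band t (st0 x) <= b)%N) sG x
             <= (\sum_(y <- Y | band t y.1 <= b) y.2)%N%:Z)%R.

Lemma stat_inv_later t t' x : t <= t' -> stat_inv t x -> stat_inv t' x.
Proof. by move=> tt' /and5P [? ? ? ? ?]; apply/and5P; split => //; lia. Qed.

Lemma sG_ge1 t x : stat_inv t x -> (1 <= sG x)%R.
Proof. by rewrite /sG => /and5P [? ? ? ? ?]; lia. Qed.

Lemma sum_sG_ge0 t (P : pred stat) L :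
  all (stat_inv t) L -> (0 <= \sum_(x <- L | P x) sG x)%R.
Proof.
elim: L => [|x L IH] /=; first by rewrite big_nil.
case/andP=> /sG_ge1 x_ge1 /IH S_ge0; rewrite big_cons; case: (P x) => //.
by apply: addr_ge0 => //; lia.
Qed.

Lemma mass_dominated_later t t' L Y : t <= t' ->
  all (fun x => st0 x <= t) L -> all (fun y => y.1 <= t) Y ->
  mass_dominated t L Y -> mass_dominated t' L Y.
Proof.
move=> tt' L_t Y_t dom b; have [none | [b' sameE]] := band_sublevel_later b tt'.
  rewrite (eq_bigl_all (P2 := xpred0) L_t); last by move=> x /none; rewrite ltnNge => /negbTE.
  by rewrite big_pred0.
rewrite (eq_bigl_all (P2 := fun x => band t (st0 x) <= b') L_t); last by move=> x /sameE.
by rewrite (eq_bigl_all (P2 := fun y => band t y.1 <= b') Y_t) // => y /sameE.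
Qed.

Section Invariant.
Context {disp : Order.disp_t} {T : orderType disp}.
Local Notation dentry := (@dentry disp T).
Local Notation summary := (@summary disp T).
Implicit Types (s : summary).

Definition gk_inv t (s : summary) (Y : seq (nat * nat)) : Prop :=
  [/\ all (stat_inv t) (stats s), all (fun y => y.1 <= t) Y & mass_dominated t (stats s) Y].

Lemma gk_inv_nth t s Y q : gk_inv t s Y -> q < size s -> stat_inv t (nth dstat (stats s) q).
Proof. by case=> s_inv _ _ qs; apply: (all_nthP dstat s_inv); rewrite size_stats. Qed.

Lemma gk_inv_later t t' s Y : t <= t' -> gk_inv t s Y -> gk_inv t' s Y.
Proof.
move=> tt' [s_inv Y_t dom]; split.
- by apply: sub_all _ s_inv => x; apply: stat_inv_later.
- by apply: sub_all _ Y_t => y /leq_trans; apply.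
- apply: mass_dominated_later tt' _ Y_t dom.
  by apply: sub_all _ s_inv => x /and5P [].
Qed.

Lemma new_stat_inv t t' s x w t0x p : p <= size s ->
  all (stat_inv t) (stats s) -> t <= t0x <= t' -> 0 < w ->
  stat_inv t' (stat_of (last dentry (take p s)) (new_entry s x w t0x p)).
Proof.
move=> ps s_inv /andP [t_t0x t0x_t'] w_gt0.
rewrite /stat_inv /stat_of /= ermin_new_entry //.
have D_le : ((ermax (ent s p))%:Z - (rlast (last dentry (take p s)) + 1) <= t%:Z)%R.
  rewrite last_take //.
  case: (ltnP p (size s)) => [lt_ps | le_sp]; last by rewrite /ent nth_default // /rlast /=; lia.
  have := all_nthP dstat s_inv p; rewrite size_stats nth_stats // => /(_ lt_ps).
  by case/and5P => _ _ + _ _; rewrite /= /rlast; lia.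
by apply/and5P; split => //; lia.
Qed.

Lemma gk_inv_insert t t' s x w t0x Y : gk_inv t s Y -> t <= t0x <= t' -> 0 < w ->
  gk_inv t' (insert s x w t0x) (rcons Y (t0x, w)).
Proof.
move=> inv t0x_range w_gt0; have tt' : t <= t' by case/andP: t0x_range; apply: leq_trans.
have [s_inv _ _] := inv; have [s_inv' Y_t' dom'] := gk_inv_later tt' inv.
rewrite /gk_inv stats_insert; set p := find _ _; set y := stat_of _ _.
have y_inv : stat_inv t' y := new_stat_inv x (find_size _ _) s_inv t0x_range w_gt0.
have sG_y : sG y = Posz w.
  by rewrite /y sG_stat_of {1}/rlast ermin_new_entry ?find_size //=; lia.
have I_split := cat_take_drop p (stats s).
split.
- by rewrite all_cat /= y_inv -all_cat I_split.
- by rewrite all_rcons Y_t' andbT; case/andP: t0x_range.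
- move=> b; have := dom' b; rewrite -{1}I_split -cats1 !big_cat !big_cons !big_nil /= sG_y.
  by case: ifP => _ dom_b; rewrite ?addr0 ?addn0 // PoszD addrCA [leRHS]addrC lerD2l.
Qed.

Lemma seglen_le t s p : seglen t s p <= p.
Proof. by apply: leq_trans (find_size _ _) _; rewrite size_rev size_take; case: ltnP. Qed.

Lemma seg_band t s p q : p < size s -> p - seglen t s p <= q < p ->
  band t (et0 (ent s q)) < vband t s p.
Proof.
move=> ps /andP [aq qp]; have hi : p.-1 - q < seglen t s p by have := seglen_le t s p; lia.
have := before_find dentry hi; rewrite nth_rev size_take ps; last lia.
by rewrite (_ : p - (p.-1 - q).+1 = q) ?nth_take // => [/negbFE-> |]; lia.
Qed.

Lemma seg_band_le t s p q : p < size s -> vband t s p <= vband t s p.+1 ->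
  p - seglen t s p <= q <= p -> band t (et0 (ent s q)) <= vband t s p.+1.
Proof.
move=> ps v_le /andP [aq qp]; apply: leq_trans v_le.
case: (ltnP q p) => [lt_qp | ge_qp]; first by apply/ltnW/seg_band => //; rewrite aq.
by rewrite (_ : q = p) //; lia.
Qed.

Lemma GstarE t s p : p < size s ->
  Gstar t s p = (\sum_(p - seglen t s p <= q < p.+1) sG (nth dstat (stats s) q))%R.
Proof.
move=> ps; rewrite big_nat_recr ?leq_subr //= /Gstar addrC GvalE //; congr (_ + _)%R.
by apply: eq_big_nat => q /andP [_ qp]; rewrite GvalE //; lia.
Qed.

Lemma gk_inv_delete t s p Y : gk_inv t s Y -> deletable t s p ->
  gk_inv t (delete_seg t s p) Y.
Proof.
case=> s_inv Y_t dom /and3P [ps v_le del_cond].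
have ap : p - seglen t s p <= p := leq_subr _ _.
rewrite /gk_inv /delete_seg stats_delete_seg //.
set a := p - seglen t s p in ap del_cond *; set I := stats s.
set mid := drop a (take p.+1 I); set z := nth dstat I p.+1; set S := (\sum_(x <- mid) sG x)%R.
have I_split : I = take a I ++ mid ++ z :: drop p.+2 I.
  by apply: take_mid_drop; rewrite ?size_stats //; lia.
have := s_inv; rewrite -/I {1}I_split !all_cat /= => /and4P [pre_inv mid_inv z_inv post_inv].
have mid_band : all (fun x => band t (st0 x) <= band t (st0 z)) mid.
  apply/(all_nthP dstat) => i; rewrite size_drop size_takel ?size_stats => [i_lt|]; last lia.
  rewrite nth_drop nth_take /z /I; last lia.
  by rewrite -!et0E; try lia; apply: seg_band_le => //; lia.
have GstarS : Gstar t s p = S.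
  by rewrite GstarE 1?ltnW // /S (big_drop_take dstat) ?size_stats //; lia.
rewrite GstarS gvalE ?DvalE // -/I -/z in del_cond.
have S_ge0 : (0 <= S)%R := sum_sG_ge0 _ mid_inv.
split => //.
- rewrite pre_inv post_inv andbT; move/and5P: z_inv => [? ? ? ? ?].
  by apply/and5P; split => //=; lia.
- move=> b; have := dom b; rewrite -/I {1}I_split !big_cat !big_cons /= sG_absorb.
  case: ifP => z_b.
    rewrite (eq_bigl_all (P2 := xpredT) mid_band) => [|x /leq_trans]; last by apply.
    by move=> dom_b; apply: le_trans _ dom_b; rewrite -/S lerD2l -addrA addrCA.
  have := sum_sG_ge0 (fun x => band t (st0 x) <= b) mid_inv.
  by move=> mid_b; apply: le_trans; rewrite lerD2l lerDr.
Qed.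

Lemma gk_inv_del_step t s s' Y : del_step t s s' -> gk_inv t s Y ->
  gk_inv t s' Y /\ forall p, ~~ deletable t s' p.
Proof. by elim=> {s s'} [s stop | s p s' del _ IH] inv; last apply/IH/gk_inv_delete. Qed.

End Invariant.

Section Run.
Variables (R : archiRealFieldType) (eps : R) (ws : nat -> nat).
Hypotheses (eps_gt0 : (0 < eps)%R) (ws_gt0 : forall i, 0 < ws i).

(* The element +oo of the initial summary counts as an update of weight 1 with t_0 = 0. *)
Definition arrivals k : seq (nat * nat) :=
  (0, 1) :: [seq (t0k eps ws j, ws j) | j <- iota 1 k].

Lemma arrivalsS k : arrivals k.+1 = rcons (arrivals k) (t0k eps ws k.+1, ws k.+1).
Proof. by rewrite /arrivals -(addn1 k) iotaD map_cat cats1 -rcons_cons add1n addn1. Qed.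

Lemma WsumS k : Wsum ws k.+1 = Wsum ws k + ws k.+1.
Proof. by rewrite /Wsum big_nat_recr. Qed.

Lemma tk0 : tk eps ws 0 = 0.
Proof. by rewrite /tk /Wsum big_geq // mulr0 truncn0. Qed.

Lemma tk_le_t0kS k : tk eps ws k <= t0k eps ws k.+1.
Proof. by apply: le_truncn; rewrite ler_pM2l // ler_nat. Qed.

Lemma t0kS_le_tkS k : t0k eps ws k.+1 <= tk eps ws k.+1.
Proof. by apply: le_truncn; rewrite ler_pM2l // ler_nat WsumS /=; have := ws_gt0 k.+1; lia. Qed.

Lemma Wsum_homo : {homo Wsum ws : k k' / k <= k'}.
Proof. by move=> k k' kk'; rewrite /Wsum [leqRHS](@big_cat_nat _ _ _ k.+1) ?leq_addr. Qed.

Lemma tk_homo : {homo tk eps ws : k k' / k <= k'}.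
Proof. by move=> k k' kk'; apply: le_truncn; rewrite ler_pM2l // ler_nat Wsum_homo. Qed.

Lemma t0k_le_tk j k : 0 < j <= k -> t0k eps ws j <= tk eps ws k.
Proof.
by case: j => // j /andP [_ jk]; apply: leq_trans (t0kS_le_tkS j) (tk_homo jk).
Qed.

Lemma gk_inv_run disp (T : orderType disp) (xs : nat -> T) S : GK_run eps xs ws S ->
  forall k, gk_inv (tk eps ws k) (S k) (arrivals k) /\
            forall p, ~~ deletable (tk eps ws k) (S k) p.
Proof.
case=> S0 S_step; elim=> [|k [inv _]].
  rewrite S0 tk0; split => [|p]; last by apply/negP => /and3P [].
  by split => // b; rewrite !big_cons !big_nil /= /sG /=.
apply: gk_inv_del_step (S_step k.+1 isT) _; rewrite arrivalsS.
by apply: gk_inv_insert inv _ (ws_gt0 _); rewrite tk_le_t0kS t0kS_le_tkS.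
Qed.

End Run.

(** * Counting type-2 elements *)

Section TypeTwoCount.
Context {disp : Order.disp_t} {T : orderType disp}.
Variables (t : nat) (s : @summary disp T) (Y : seq (nat * nat)) (b : nat).
Hypotheses (inv : gk_inv t s Y) (stuck : forall p, ~~ deletable t s p).

Local Notation G q := (sG (nth dstat (stats s) q)).
Local Notation type2_at_band p := ((vband t s p <= vband t s p.+1) && (vband t s p.+1 == b)).

Let witnesses := [seq p <- iota 0 (size s).-1 | type2_at_band p].

(* The positions of seg(e_p), e_p and e_(p+1). *)
Let window p q := (p - seglen t s p <= q) && (q < p.+2).

Lemma witnessP p : p \in witnesses ->
  [/\ p.+1 < size s, vband t s p <= vband t s p.+1 & vband t s p.+1 = b].
Proof.
by rewrite mem_filter mem_iota => /andP [/andP [-> /eqP ->] /andP [_ ?]]; split=> //; lia.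
Qed.

Lemma window_mass p : p \in witnesses ->
  ((2 ^ b)%:Z <= (\sum_(0 <= q < size s | window p q) G q) *+ 2)%R.
Proof.
(* Undeletability gives G*_p + g_(p+1) > t - Delta_(p+1) >= t - t_0(e_(p+1)), and the
   band b of e_(p+1) makes this at least (2^b - 1) / 2. *)
case/witnessP => ps v_le v_b; rewrite big_nat_window; try lia.
rewrite big_nat_recr /= -?GstarE; try lia.
have := stuck p; rewrite /deletable ps v_le /= -ltNge gvalE ?DvalE //.
have /and5P [_ zD _ zt zw] := gk_inv_nth inv ps.
have gap : 2 ^ b <= 2 * (t - st0 (nth dstat (stats s) p.+1)) + 1.
  by rewrite -v_b /vband et0E //; apply: exp2_band_le.
by rewrite mulr2n /sG; lia.
Qed.

Lemma window_band p q : p \in witnesses -> window p q ->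
  band t (st0 (nth dstat (stats s) q)) <= b.
Proof.
case/witnessP => ps v_le <- /andP [aq qp]; rewrite -et0E; last lia.
have [-> // | ne] := eqVneq q p.+1.
by apply: seg_band_le (ltnW ps) v_le _; rewrite aq; lia.
Qed.

Lemma window_overlap p p' q : p \in witnesses -> p' \in witnesses -> p < p' ->
  window p q -> window p' q -> p' = p.+1.
Proof.
move=> /witnessP [ps _ v_b] /witnessP [p's v_le' v_b'] pp' /andP [_ qp] /andP [aq' _].
(* Otherwise e_(p+1) lies in seg(e_p'), whose bands are below v(e_p') <= b = v(e_(p+1)). *)
apply/eqP; rewrite eqn_leq pp' andbT leqNgt; apply/negP => lt_p'.
have : vband t s p.+1 < vband t s p' by apply: seg_band; lia.
by rewrite v_b -v_b' ltnNge v_le'.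
Qed.

Lemma type2_band_count :
  count (fun p => type2_at_band p) (iota 0 (size s).-1) * 2 ^ b
    <= 4 * \sum_(y <- Y | band t y.1 <= b) y.2.
Proof.
case: inv => s_inv _ dom; rewrite -size_filter -/witnesses -lez_nat.
have mass_le := dom b; rewrite (big_nth dstat) size_stats in mass_le.
have witness_sum : (\sum_(p <- witnesses) (2 ^ b)%:Z
    <= (\sum_(0 <= q < size s | (band t (st0 (nth dstat (stats s) q)) <= b)%N) G q) *+ 4)%R.
  apply: le_trans
    (_ : \sum_(p <- witnesses) (\sum_(0 <= q < size s | window p q) G q) *+ 2 <= _)%R.
    by rewrite big_seq [leRHS]big_seq; apply: ler_sum => p /window_mass.
  rewrite sumrMnl (mulrnA _ 2 2); apply: ler_wMn2r; apply: sum_windows_le.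
  - by rewrite /witnesses; apply: sorted_filter; [apply: ltn_trans | apply: iota_ltn_sorted].
  - by move=> q qs; have := sG_ge1 (gk_inv_nth inv qs); lia.
  - exact: window_band.
  - exact: window_overlap.
move: witness_sum; rewrite big_const_seq iter_addr_0 count_predT => witness_sum.
by have := le_trans witness_sum (ler_wMn2r 4 mass_le); lia.
Qed.

End TypeTwoCount.

Lemma num_type2_split disp (T : orderType disp) t (s : @summary disp T) Y :
  gk_inv t s Y ->
  num_type2 t s <= \sum_(c < (trunc_log 2 t).+2)
    count (fun p => (vband t s p <= vband t s p.+1) && (vband t s p.+1 == c))
          (iota 0 (size s).-1).
Proof.
move=> inv; have band_le p : p \in iota 0 (size s).-1 -> vband t s p.+1 <= (trunc_log 2 t).+1.
  rewrite mem_iota => /andP [_ lt_p]; have ps : p.+1 < size s by lia.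
  by apply: band_le_log; rewrite et0E //; case/and5P: (gk_inv_nth inv ps).
apply: leq_trans (count_le_sum_levels _ band_le); apply: eq_leq.
by apply: eq_count => p; rewrite -leqNgt.
Qed.

(** * The weight of the updates of a band *)

Section UpdateWeight.
Variables (R : archiRealFieldType) (eps : R) (ws : nat -> nat).
Hypotheses (eps_gt0 : (0 < eps)%R) (ws_gt0 : forall i, 0 < ws i).

Lemma sum_from_first_le k (P : pred nat) j0 : 1 <= j0 <= k -> P j0 ->
  (forall j, 1 <= j <= k -> P j -> j0 <= j) ->
  \sum_(j <- iota 1 k | P j) ws j <= Wsum ws k - Wsum ws j0.-1.
Proof.
move=> /andP [j0_ge1 j0k] _ j0_min.
have splitW : Wsum ws k = Wsum ws j0.-1 + \sum_(j0 <= j < k.+1) ws j.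
  by rewrite /Wsum (@big_cat_nat _ _ _ j0) ?prednK //; lia.
have -> : iota 1 k = index_iota 1 k.+1 by rewrite /index_iota subSS subn0.
rewrite splitW addKn (@big_cat_nat _ _ _ j0) //=; last lia.
rewrite big_nat_cond big_pred0 => [|j]; last first.
  by apply/negP => /andP [/andP [j1 jj0] /j0_min]; lia.
by rewrite add0n big_mkcond /= leq_sum // => j _; case: ifP.
Qed.

Lemma stream_weight_band_le k b :
  ((\sum_(j <- iota 1 k | band (tk eps ws k) (t0k eps ws j) <= b) ws j)%N%:R
     <= (2 ^ b.+1)%:R / eps + 1 :> R)%R.
Proof.
set t := tk eps ws k.
have bound_ge0 : (0 <= (2 ^ b.+1)%:R / eps :> R)%R by rewrite divr_ge0 // ltW.
have [has_j | no_j] := boolP (has (fun j => band t (t0k eps ws j) <= b) (iota 1 k)); last first.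
  by rewrite big_hasC //; lra.
have /ex_minnP [j0 /andP [j0_in j0_b] j0_min] :
    exists j, (j \in iota 1 k) && (band t (t0k eps ws j) <= b).
  by case/hasP: has_j => j ? ?; exists j; apply/andP.
move: j0_in; rewrite mem_iota add1n ltnS => j0_range.
have sum_le : \sum_(j <- iota 1 k | band t (t0k eps ws j) <= b) ws j
               <= Wsum ws k - Wsum ws j0.-1.
  apply: sum_from_first_le j0_range j0_b _ => j jk jb.
  by apply: j0_min; rewrite mem_iota jb; lia.
have t_close : t < t0k eps ws j0 + 2 ^ b.+1.
  have t0_le_t : t0k eps ws j0 <= t by apply: t0k_le_tk.
  by move: j0_b; rewrite band_leE // => /leq_trans /(_ (ltnW (band_bound_lt t b))); lia.
have t0_le : ((t0k eps ws j0)%:R <= eps * (Wsum ws j0.-1).+1%:R :> R)%R.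
  by rewrite /t0k truncn_le mulr_ge0 // ltW.
have t_gt : (eps * (Wsum ws k)%:R < t.+1%:R :> R)%R by apply: truncnS_gt.
have W_le : Wsum ws j0.-1 <= Wsum ws k by apply: Wsum_homo; lia.
rewrite -lerBlDr ler_pdivlMr // mulrBl mul1r mulrC.
move: sum_le; rewrite -(ler_nat R) => /(ler_wpM2l (ltW eps_gt0)).
rewrite natrB // mulrBr => eps_sum_le.
have : (t.+1%:R <= (t0k eps ws j0)%:R + (2 ^ b.+1)%:R :> R)%R by rewrite -natrD ler_nat.
by move: t0_le; rewrite -natr1 mulrDr mulr1; lra.
Qed.

End UpdateWeight.

Section PerBandBound.
Variables (R : archiRealFieldType) (eps : R) (ws : nat -> nat).
Hypotheses (eps_gt0 : (0 < eps)%R) (eps_lt1 : (eps < 1)%R) (ws_gt0 : forall i, 0 < ws i).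

Lemma arrivals_mass_le k b :
  ((\sum_(y <- arrivals eps ws k | band (tk eps ws k) y.1 <= b) y.2)%N%:R
     <= (2 ^ b.+1)%:R / eps + 2 :> R)%R.
Proof.
have := stream_weight_band_le eps_gt0 ws_gt0 k b.
by rewrite /arrivals big_cons big_map /=; case: ifP => _; rewrite ?natrD; lra.
Qed.

Lemma type2_band_count_le disp (T : orderType disp) (s : @summary disp T) k b :
  gk_inv (tk eps ws k) s (arrivals eps ws k) -> (forall p, ~~ deletable (tk eps ws k) s p) ->
  ((count (fun p => (vband (tk eps ws k) s p <= vband (tk eps ws k) s p.+1)
                    && (vband (tk eps ws k) s p.+1 == b)) (iota 0 (size s).-1))%N%:R
     <= 16%:R / eps :> R)%R.
Proof.
move=> inv stuck; have := type2_band_count b inv stuck; rewrite -(ler_nat R) !natrM.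
have := arrivals_mass_le k b; rewrite expnS natrM.
set C := ((count _ _)%:R : R)%R; set P := ((2 ^ b)%:R : R)%R.
set M := ((\sum_(y <- _ | _) _)%:R : R)%R.
have P_ge1 : (1 <= P)%R by rewrite ler1n expn_gt0.
have e_ge1 : (1 <= eps^-1)%R by rewrite invf_ge1 // ltW.
have Pe_ge1 : (1 <= P * eps^-1)%R by rewrite mulr_ege1.
move=> M_le CP_le; rewrite -(ler_pM2r (lt_le_trans ltr01 P_ge1)).
lra.
Qed.

End PerBandBound.

Theorem mainTheorem9 :
  exists C : nat,
  forall (R : archiRealFieldType) (disp : Order.disp_t) (T : orderType disp)
         (eps : R) (xs : nat -> T) (ws : nat -> nat) (S : nat -> @summary disp T)
         (k : nat),
    (0 < eps)%R -> (eps < 1)%R ->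
    (forall i, 0 < ws i) ->
    GK_run eps xs ws S ->
    ((num_type2 (tk eps ws k) (S k))%:R
      <= C%:R * eps^-1 * (trunc_log 2 (tk eps ws k)).+1%:R :> R)%R.
Proof.
exists 32 => R disp T eps xs ws S k eps_gt0 eps_lt1 ws_gt0 run.
have [inv stuck] := gk_inv_run eps_gt0 ws_gt0 run k.
have split_bands := num_type2_split inv.
have per_band b := type2_band_count_le eps_gt0 eps_lt1 ws_gt0 b inv stuck.
set L := trunc_log 2 _ in split_bands *.
apply: le_trans (_ : \sum_(c < L.+2) (16%:R / eps) <= _)%R.
  by rewrite -(ler_nat R) natr_sum in split_bands; apply: le_trans split_bands (ler_sum _ _).
rewrite sumr_const card_ord -[(_ / eps *+ _)%R]mulr_natr -[L.+2]addn2 -[L.+1]addn1 !natrD.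
have : (0 <= eps^-1 * L%:R)%R by rewrite mulr_ge0 // invr_ge0 (ltW eps_gt0).
lra.
Qed.
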